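(* Let $q\ge 2$ and $n\ge 1$ be integers. Then: (i) $I_q(n,2)=q^n$ and $I_q(n,2n)=q$. (ii) For every even integer $d$ with $4\le d\le 2n-2$, one has $I_q(n,d)\le \frac12\left(q^{\,n-\frac d2+1}+q^{\,n-\frac d2}\right)$. (iii) For every even integer $d$ with $2q\le d\le 2n-2$, one has $I_q(n,d)\le q^{\,n-\frac d2}$.
   Context: $[q]=\{1,\dots,q\}$ and $[q]^n$ is the set of words of length $n$ over $[q]$; a $q$-ary code of length $n$ is a subset of $[q]^n$ with at least two elements. For $\mathbf u,\mathbf v\in[q]^n$, $\ell_{\rm LCS}(\mathbf u,\mathbf v)$ is the length of a longest common subsequence of $\mathbf u$ and $\mathbf v$, and the insdel distance $d_I(\mathbf u,\mathbf v)$ is the minimum number of insertions and deletions of symbols transforming $\mathbf u$ into $\mathbf v$; equivalently $d_I(\mathbf u,\mathbf v)=2n-2\ell_{\rm LCS}(\mathbf u,\mathbf v)$. The insdel distance $d_I(\mathcal C)$ of a code $\mathcal C$ is the minimum of $d_I(\mathbf u,\mathbf v)$ over distinct $\mathbf u,\mathbf v\in\mathcal C$. $I_q(n,d)$ denotes the largest size $M$ of a code $\mathcal C\subseteq[q]^n$ with $d_I(\mathcal C)\ge d$. *)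

From mathcomp Require Import all_boot all_order.
Set Implicit Arguments. Unset Strict Implicit. Unset Printing Implicit Defensive.

(* Words of length n over [q] are modelled as n.-tuple 'I_q
   (the alphabet 'I_q = {0,...,q-1} is a relabelling of [q] = {1,...,q}). *)

Definition lcs_len (q n : nat) (u v : n.-tuple 'I_q) : nat :=
  \max_(k < n.+1 | [exists s : k.-tuple 'I_q,
                      subseq (tval s) (tval u) && subseq (tval s) (tval v)]) k.

Definition insdel (q n : nat) (u v : n.-tuple 'I_q) : nat :=
  2 * n - 2 * lcs_len u v.

Definition is_code_min_dist (q n d : nat) (C : {set n.-tuple 'I_q}) : bool :=
  (1 < #|C|) &&
  [forall u in C, forall v in C, (u != v) ==> (d <= insdel u v)].

Definition Iq (q n d : nat) : nat :=
  \max_(C : {set n.-tuple 'I_q} | is_code_min_dist d C) #|C|.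

From mathcomp Require Import all_boot all_order zify.
Set Implicit Arguments. Unset Strict Implicit. Unset Printing Implicit Defensive.

(* Write d = 2t.  Two distinct codewords of insdel distance at least d have no
   common subsequence of length n - t + 1, so every "pattern" of that length
   is a subsequence of at most one codeword.  If every word contains at least
   k patterns from a family U, double counting gives k * #|C| <= #|U|.
   For (ii) the patterns are the words of length n - t + 1, plus a second copy
   of those ending in a repeated letter (q^(n-t+1) + q^(n-t) in all): the first
   n - t - 1 letters of a word followed by two of the next three letters give
   two distinct such patterns.  For (iii) the patterns are the words of length
   n - t + 1 ending in a repeated letter: the last t + 1 > q letters of a word
   repeat a letter, so every word contains one of these q^(n-t) patterns.
   The upper bounds in (i) take as patterns all words, resp. single letters;
   they are attained by all words, resp. the q constant words. *)

Lemma double_count_card (T U : finType) (C : {set T}) (R : T -> pred U) k :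
  (forall p, {in C &, forall u v, R u p -> R v p -> u = v}) ->
  {in C, forall u, k <= #|R u|} ->
  k * #|C| <= #|U|.
Proof.
move=> uniqR cardR; rewrite mulnC -sum_nat_const.
apply: (@leq_trans (\sum_(u in C) \sum_p (R u p : nat))).
  apply: leq_sum => u uC; apply: leq_trans (cardR u uC) _.
  by rewrite -sum1_card big_mkcond.
rewrite -sum1_card exchange_big /=; apply: leq_sum => p _.
rewrite -big_mkcondr /= sum1dep_card.
apply/card_le1_eqP => u v; rewrite !inE => /andP[uC Rup] /andP[vC Rvp].
exact: (uniqR p v u).
Qed.

Lemma subseq_take_cat (T : eqType) k (s t : seq T) :
  subseq t (drop k s) -> subseq (take k s ++ t) s.
Proof. by move=> st; rewrite -{2}(cat_take_drop k s); apply: cat_subseq. Qed.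

Lemma subseq_pair_cons (T : eqType) (a b : T) (s : seq T) :
  b \in s -> subseq [:: a; b] (a :: s).
Proof.
move=> bs; apply: (@cat_subseq _ [:: a] _ [:: a]).
  exact: subseq_refl.
by rewrite sub1seq.
Qed.

Lemma not_uniq_subseq_pair (T : eqType) (s : seq T) :
  ~~ uniq s -> exists c, subseq [:: c; c] s.
Proof.
elim: s => [|x s IHs] //=; rewrite negb_and negbK => /orP[xs | /IHs[c cc]].
  by exists x; rewrite /= eqxx sub1seq.
by exists c; apply: subseq_trans cc (subseq_cons s x).
Qed.

Section LongestCommonSubsequence.

Variables q n : nat.
Implicit Types u v : n.-tuple 'I_q.

Lemma lcs_len_le u v : lcs_len u v <= n.
Proof. by apply/bigmax_leqP => i _; rewrite -ltnS. Qed.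

Lemma size_subseq_le_lcs_len u v (s : seq 'I_q) :
  subseq s u -> subseq s v -> size s <= lcs_len u v.
Proof.
move=> su sv; have ltsn : size s < n.+1.
  by rewrite ltnS -(size_tuple u) size_subseq.
have -> : size s = Ordinal ltsn by [].
apply: leq_bigmax_cond; apply/existsP.
by exists (@Tuple (Ordinal ltsn) _ s (eqxx (size s))); rewrite /= su sv.
Qed.

Lemma lcs_len_lt u v : u != v -> lcs_len u v < n.
Proof.
case: n u v => [|m] u v uv.
  by move: uv; rewrite (tuple0 u) (tuple0 v) eqxx.
rewrite ltnS; apply/bigmax_leqP => i /existsP[[s /eqP sz] /= /andP[su sv]].
rewrite -ltnS ltn_neqAle -ltnS ltn_ord andbT; apply: contra uv => /eqP isz.
have [_ eqsu] := size_subseq_leqif su; have [_ eqsv] := size_subseq_leqif sv.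
move: eqsu eqsv; rewrite !size_tuple sz isz eqxx.
move=> /esym/eqP su_eq /esym/eqP sv_eq.
by apply/eqP/val_inj; rewrite /= -su_eq sv_eq.
Qed.

Lemma lcs_len_eq0 u v : {in u, forall x, x \notin v} -> lcs_len u v = 0.
Proof.
move=> disj; apply/eqP; rewrite -leqn0.
apply/bigmax_leqP => i /existsP[[[|x s] /= /eqP <-] // /andP[su sv]].
have xu : x \in u := mem_subseq su (mem_head x s).
by have := mem_subseq sv (mem_head x s); rewrite (negbTE (disj x xu)).
Qed.

End LongestCommonSubsequence.

Lemma code_eq_of_common_subseq q n d (C : {set n.-tuple 'I_q}) u v
    (s : seq 'I_q) :
  is_code_min_dist d C -> u \in C -> v \in C -> subseq s u -> subseq s v ->
  2 * n < 2 * size s + d -> u = v.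
Proof.
move=> /andP[_ /forall_inP distC] uC vC su sv long.
apply/eqP; apply: contraLR long => uv; rewrite -leqNgt.
have := size_subseq_le_lcs_len su sv; have := lcs_len_le u v.
move: distC => /(_ u uC) /forall_inP /(_ v vC) /implyP /(_ uv).
rewrite /insdel; lia.
Qed.

Lemma leq_card_Iq q n d (C : {set n.-tuple 'I_q}) :
  is_code_min_dist d C -> #|C| <= Iq q n d.
Proof. exact: leq_bigmax_cond. Qed.

Lemma Iq_pattern_bound q n d (U : finType) (w : U -> seq 'I_q) k :
  (forall p, 2 * n < 2 * size (w p) + d) ->
  (forall u : n.-tuple 'I_q, k <= #|[pred p | subseq (w p) u]|) ->
  k * Iq q n d <= #|U|.
Proof.
move=> long contains; rewrite /Iq.
apply: (big_ind (fun m => k * m <= #|U|)) => [|m1 m2|C codeC].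
- by rewrite muln0.
- by rewrite maxnMr geq_max => -> ->.
apply: (double_count_card (R := fun (u : n.-tuple _) p => subseq (w p) u))
  => [p u v uC vC su sv | u _]; last exact: contains.
exact: code_eq_of_common_subseq codeC uC vC su sv (long p).
Qed.

Lemma Iq_dist2 q n : 1 < q -> 0 < n -> Iq q n 2 = q ^ n.
Proof.
move=> q_gt1 n_gt0; have cardW : #|{: n.-tuple 'I_q}| = q ^ n.
  by rewrite card_tuple card_ord.
apply/eqP; rewrite eqn_leq -cardW; apply/andP; split.
  rewrite -[Iq _ _ _]mul1n.
  apply: (Iq_pattern_bound (w := @tval n _)) => [p | u].
    by rewrite size_tuple; lia.
  by apply/card_gt0P; exists u; rewrite inE subseq_refl.
rewrite -cardsT; apply: leq_card_Iq.
apply/andP; split; first by rewrite cardsT cardW -(expn0 q) ltn_exp2l.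
apply/forall_inP => u _; apply/forall_inP => v _; apply/implyP => uv.
by rewrite /insdel; have := lcs_len_lt uv; lia.
Qed.

Lemma Iq_dist2n q n : 1 < q -> 0 < n -> Iq q n (2 * n) = q.
Proof.
move=> q_gt1 n_gt0; apply/eqP; rewrite eqn_leq; apply/andP; split.
  rewrite -[Iq _ _ _]mul1n -[q in _ <= q]card_ord.
  apply: (Iq_pattern_bound (w := fun c => [:: c])) => [p /= | u]; first by lia.
  apply/card_gt0P; exists (tnth u (Ordinal n_gt0)).
  by rewrite inE sub1seq mem_tnth.
pose const_word (c : 'I_q) := [tuple of nseq n c].
have const_inj : injective const_word.
  move=> c c' /(congr1 (fun u : n.-tuple 'I_q => c \in tval u)).
  by rewrite /= !mem_nseq eqxx n_gt0 => /esym/eqP.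
rewrite -[q in q <= _]card_ord -cardsT -(card_imset _ const_inj).
apply: leq_card_Iq; apply/andP; split.
  by rewrite card_imset // cardsT card_ord.
apply/forall_inP => _ /imsetP[c _ ->]; apply/forall_inP => _ /imsetP[c' _ ->].
apply/implyP => cc'; rewrite /insdel lcs_len_eq0 ?muln0 ?subn0 // => x.
rewrite !mem_nseq => /andP[_ /eqP->].
by apply: contra cc' => /andP[_ /eqP->].
Qed.

Lemma Iq_twice_le q n t : 2 <= t -> t < n ->
  2 * Iq q n t.*2 <= q ^ (n - t).+1 + q ^ (n - t).
Proof.
move=> t_ge2 t_lt_n; set r := (n - t).-1; have -> : n - t = r.+1 by lia.
pose U := (r.-tuple 'I_q * 'I_q * 'I_q + r.-tuple 'I_q * 'I_q)%type.
have -> : q ^ r.+2 + q ^ r.+1 = #|{: U}|.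
  by rewrite card_sum !card_prod card_tuple card_ord !expnSr.
pose w (p : U) := match p with
  | inl (s, a, b) => tval s ++ [:: a; b]
  | inr (s, c) => tval s ++ [:: c; c]
  end.
apply: (Iq_pattern_bound (w := w)) => [[[[s a] b] | [s c]] | u];
  rewrite ?size_cat ?size_tuple /=; try lia.
have sizeP : size (take r u) == r.
  by apply/eqP; rewrite size_takel // size_tuple; lia.
pose P := Tuple sizeP.
have : 2 < size (drop r u) by rewrite size_drop size_tuple; lia.
case dropE: (drop r u) => [|x [|y [|z tl]]] // _.
have contains s : subseq s [:: x, y, z & tl] -> subseq (take r u ++ s) u.
  by move=> ss; rewrite subseq_take_cat // dropE.
apply/card_gt1P; case: (eqVneq x y) => [xy | xy]; first subst y.
  exists (inl (P, x, x)), (inr (P, x)); split=> //; rewrite inE;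
    by apply/contains/subseq_pair_cons; rewrite mem_head.
case: (eqVneq y z) => [yz | yz]; first subst z.
  exists (inl (P, y, y)), (inr (P, y)); split=> //; rewrite inE;
    by apply/contains/(subseq_trans _ (subseq_cons _ x))/subseq_pair_cons;
    rewrite mem_head.
exists (inl (P, x, y)), (inl (P, x, z)); split.
- by rewrite inE; apply/contains/subseq_pair_cons; rewrite mem_head.
- by rewrite inE; apply/contains/subseq_pair_cons; rewrite !inE eqxx orbT.
- by apply: contra_neq yz => -[].
Qed.

Lemma Iq_le_pow q n t : q <= t -> t < n -> Iq q n t.*2 <= q ^ (n - t).
Proof.
move=> q_le_t t_lt_n; set r := (n - t).-1; have -> : n - t = r.+1 by lia.
have -> : q ^ r.+1 = #|{: r.-tuple 'I_q * 'I_q}|.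
  by rewrite card_prod card_tuple card_ord expnSr.
rewrite -[Iq _ _ _]mul1n.
apply: (Iq_pattern_bound (w := fun p => tval p.1 ++ [:: p.2; p.2]))
  => [p | u]; first by rewrite size_cat size_tuple /=; lia.
have sizeP : size (take r u) == r.
  by apply/eqP; rewrite size_takel // size_tuple; lia.
have [c cc] : exists c, subseq [:: c; c] (drop r u).
  apply: not_uniq_subseq_pair; apply/negP => /card_uniqP card_drop.
  have := max_card (mem (drop r u)).
  by rewrite card_drop card_ord size_drop size_tuple; lia.
by apply/card_gt0P; exists (Tuple sizeP, c); rewrite inE subseq_take_cat.
Qed.

Theorem theorem3p6 (q n : nat) (hq : 2 <= q) (hn : 1 <= n) :
  (Iq q n 2 = q ^ n /\ Iq q n (2 * n) = q) /\
  (forall d : nat, ~~ odd d -> 4 <= d -> d <= 2 * n - 2 ->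
     2 * Iq q n d <= q ^ (n - d./2 + 1) + q ^ (n - d./2)) /\
  (forall d : nat, ~~ odd d -> 2 * q <= d -> d <= 2 * n - 2 ->
     Iq q n d <= q ^ (n - d./2)).
Proof.
split; first by split; [exact: Iq_dist2 | exact: Iq_dist2n].
split=> d /even_halfK dE d_ge d_le; rewrite -{1}dE.
- by rewrite addn1; apply: Iq_twice_le; lia.
- by apply: Iq_le_pow; lia.
Qed.
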